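(* Let $g:\{\pm1\}^{m_1}\times\{\pm1\}^{m_2}\to\{\pm1\}$ be a gadget with $\hat g(S,T)=0$ whenever $S=\emptyset$ or $T=\emptyset$. Let $\mathcal{C}:(\{\pm1\}^{m_1})^n\times(\{\pm1\}^{m_2})^n\to[-1,1]$ be a randomized two-party protocol and $\mathcal{C}_{\downarrow g}$ its $g$-fiber. Then for every $I\subseteq[n]$, $$\widehat{\mathcal{C}_{\downarrow g}}(I)=\sum_{\substack{S^I,T^I\\ S_i\ne\emptyset,\,T_i\ne\emptyset\ \forall i\in I}}\hat{\mathcal{C}}(S^I,T^I)\prod_{i\in I}\hat g(S_i,T_i).$$
   Context: Fourier coefficients of the gadget: $\hat g(S,T)=\mathbb{E}[g(\mathbf{x},\mathbf{y})\prod_{j\in S}\mathbf{x}_j\prod_{j\in T}\mathbf{y}_j]$ for $S\subseteq[m_1],T\subseteq[m_2]$ and $\mathbf{x},\mathbf{y}$ uniform. A randomized protocol $\mathcal{C}$ is identified with the function $(x,y)\mapsto$ its expected output over internal randomness. Inputs $x\in(\{\pm1\}^{m_1})^n$ consist of blocks $x_1,\dots,x_n\in\{\pm1\}^{m_1}$, similarly for $y$. For tuples $S^{[n]}=(S_i)_{i\in[n]}$ with $S_i\subseteq[m_1]$ and $T^{[n]}=(T_i)_{i\in[n]}$ with $T_i\subseteq[m_2]$, $\hat{\mathcal{C}}(S^{[n]},T^{[n]})=\mathbb{E}[\mathcal{C}(\mathbf{x},\mathbf{y})\prod_i\prod_{j\in S_i}\mathbf{x}_{i,j}\prod_i\prod_{j\in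 T_i}\mathbf{y}_{i,j}]$ for uniform $\mathbf{x},\mathbf{y}$. $S^I,T^I$ denote such tuples with $S_j=T_j=\emptyset$ for all $j\notin I$. The $g$-fiber is $\mathcal{C}_{\downarrow g}(z)=\mathbb{E}[\mathcal{C}(\mathbf{x},\mathbf{y})\mid g(\mathbf{x}_i,\mathbf{y}_i)=z_i\ \forall i]$ for $z\in\{\pm1\}^n$, with $\mathbf{x},\mathbf{y}$ uniform, and $\widehat{\mathcal{C}_{\downarrow g}}(I)=\mathbb{E}_{\mathbf z}[\mathcal{C}_{\downarrow g}(\mathbf z)\prod_{i\in I}\mathbf z_i]$ for uniform $\mathbf z\in\{\pm1\}^n$. *)

(* Boolean encoding of {+-1}: b : bool stands for pm b,
   with pm false = 1, pm true = -1. *)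
From HB Require Import structures.
From mathcomp Require Import all_boot all_order all_algebra.
Set Implicit Arguments. Unset Strict Implicit. Unset Printing Implicit Defensive.
Import Order.TTheory GRing.Theory Num.Theory.
Local Open Scope ring_scope.

Definition pm {R : ringType} (b : bool) : R := if b then -1 else 1.

Definition Exp {R : fieldType} {T : finType} (f : T -> R) : R :=
  (\sum_(t : T) f t) / #|{: T}|%:R.

Notation cube m := {ffun 'I_m -> bool}.
Notation blocks n m := {ffun 'I_n -> cube m}.

Definition chi {R : ringType} {m : nat} (S : {set 'I_m}) (x : cube m) : R :=
  \prod_(j in S) pm (x j).

Definition ghat {R : fieldType} {m1 m2 : nat}
    (g : cube m1 -> cube m2 -> bool) (S : {set 'I_m1}) (T : {set 'I_m2}) : R :=
  Exp (fun xy : cube m1 * cube m2 =>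
         pm (g xy.1 xy.2) * chi S xy.1 * chi T xy.2).

Definition Chat {R : fieldType} {n m1 m2 : nat}
    (C : blocks n m1 -> blocks n m2 -> R)
    (S : {ffun 'I_n -> {set 'I_m1}}) (T : {ffun 'I_n -> {set 'I_m2}}) : R :=
  Exp (fun xy : blocks n m1 * blocks n m2 =>
         C xy.1 xy.2 * (\prod_(i < n) chi (S i) (xy.1 i))
                     * (\prod_(i < n) chi (T i) (xy.2 i))).

Definition gfiber {R : fieldType} {n m1 m2 : nat}
    (g : cube m1 -> cube m2 -> bool) (C : blocks n m1 -> blocks n m2 -> R)
    (z : {ffun 'I_n -> bool}) : R :=
  let ev := fun xy : blocks n m1 * blocks n m2 =>
              [forall i, g (xy.1 i) (xy.2 i) == z i] in
  (\sum_(xy | ev xy) C xy.1 xy.2) / #|[pred xy | ev xy]|%:R.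

Definition gfiber_hat {R : fieldType} {n m1 m2 : nat}
    (g : cube m1 -> cube m2 -> bool) (C : blocks n m1 -> blocks n m2 -> R)
    (I : {set 'I_n}) : R :=
  Exp (fun z : {ffun 'I_n -> bool} => gfiber g C z * \prod_(i in I) pm (z i)).

(* Expand each factor pm (g (x_i, y_i)), i in I, in the Fourier basis of the
   gadget; summed against C, this turns the correlation of C with
   prod_(i in I) pm (g (x_i, y_i)) into the right-hand side.  The fiber average
   equals that correlation because (x, y) |-> (g (x_i, y_i))_i is uniform on
   {+-1}^n: for nonempty J the same expansion writes
   prod_(i in J) pm (g (x_i, y_i)) as a combination of block characters with
   some nonempty S_i, and these sum to zero. *)

From HB Require Import structures.
From mathcomp Require Import all_boot all_order all_algebra.
From mathcomp Require Import ring.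
Import Order.TTheory GRing.Theory Num.Theory.
Local Open Scope ring_scope.

Set Implicit Arguments. Unset Strict Implicit. Unset Printing Implicit Defensive.

Lemma pmN {R : nzRingType} (b : bool) : pm (~~ b) = - pm b :> R.
Proof. by case: b; rewrite /pm ?opprK. Qed.

Lemma pm_sqr {R : nzRingType} (b : bool) : pm b * pm b = 1 :> R.
Proof. by case: b; rewrite /pm ?mulrNN mulr1. Qed.

Lemma chi_set0 {R : nzRingType} m (x : cube m) : chi set0 x = 1 :> R.
Proof. by rewrite /chi big_set0. Qed.

Lemma prod_add1_subsets (R : comNzRingType) k (c : 'I_k -> R) :
  \prod_(i < k) (c i + 1) = \sum_(J : {set 'I_k}) \prod_(i in J) c i.
Proof. by rewrite bigA_distr; apply: congr_big => // J; rewrite -big_mkcond. Qed.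

Lemma prod_pm_add1 (R : comNzRingType) k (a b : {ffun 'I_k -> bool}) :
  \prod_(i < k) (pm (a i) * pm (b i) + 1) = if a == b then 2%:R ^+ k else 0 :> R.
Proof.
case: eqP => [->|/eqP neq_ab].
  by rewrite -[in RHS](card_ord k) -prodr_const; apply: eq_bigr => i _; rewrite pm_sqr.
have [i neq_abi] : exists i, a i != b i.
  apply/existsP; rewrite -negb_forall; apply: contra neq_ab => /forallP eq_ab.
  by apply/eqP/ffunP => i; apply/eqP.
have ai_eq : a i = ~~ b i by move: neq_abi; case: (a i); case: (b i).
by rewrite (bigD1 i) //= ai_eq pmN mulNr pm_sqr addNr mul0r.
Qed.

Lemma sum_chi_mul (R : comNzRingType) m (x a : cube m) :
  \sum_(S : {set 'I_m}) chi S x * chi S a = if x == a then 2%:R ^+ m else 0 :> R.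
Proof.
by rewrite -prod_pm_add1 prod_add1_subsets; apply: eq_bigr => S _; rewrite -big_split.
Qed.

Lemma sum_odd_involution_eq0 (R : numDomainType) (T : finType) (f : T -> T) (F : T -> R) :
  involutive f -> (forall x, F (f x) = - F x) -> \sum_x F x = 0.
Proof.
move=> fK Ff; have : \sum_x F x = - \sum_x F x.
  by rewrite {1}(reindex_inj (inv_inj fK)) -sumrN; apply: eq_bigr => x _; rewrite Ff.
by move/eqP; rewrite -subr_eq0 opprK -mulr2n mulrn_eq0 => /eqP.
Qed.

Definition bchi {R : nzRingType} n m (S : {ffun 'I_n -> {set 'I_m}}) (x : blocks n m) : R :=
  \prod_(i < n) chi (S i) (x i).

Lemma sum_bchi_eq0 (R : numDomainType) n m (S : {ffun 'I_n -> {set 'I_m}}) i :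
  S i != set0 -> \sum_(x : blocks n m) bchi S x = 0 :> R.
Proof.
case/set0Pn => j j_Si.
pose flip (x : blocks n m) : blocks n m :=
  [ffun k => if k == i then [ffun l => if l == j then ~~ x i l else x i l] else x k].
apply: (@sum_odd_involution_eq0 _ _ flip).
  move=> x; apply/ffunP => k; rewrite !ffunE; case: eqP => [->|//].
  by apply/ffunP => l; rewrite !ffunE eqxx !ffunE; case: eqP; rewrite ?negbK.
move=> x; rewrite /bchi (bigD1 i) // [in RHS](bigD1 i) //= -mulNr; congr (_ * _).
  rewrite ffunE eqxx /chi (bigD1 j) // [in RHS](bigD1 j) //= ffunE eqxx pmN mulNr.
  by congr (- (_ * _)); apply: eq_bigr => l /andP [_ /negbTE nlj]; rewrite ffunE nlj.
by apply: eq_bigr => k /negbTE nki; rewrite ffunE nki.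
Qed.

Section Gadget.
Variables (R : numFieldType) (m1 m2 : nat) (g : cube m1 -> cube m2 -> bool).

Lemma gadget_fourier (a : cube m1) (b : cube m2) :
  pm (g a b) = \sum_(S : {set 'I_m1}) \sum_(T : {set 'I_m2})
                 ghat (R := R) g S T * chi S a * chi T b.
Proof.
pose M : R := #|{: cube m1 * cube m2}|%:R.
have M_2pow : M = 2%:R ^+ m1 * 2%:R ^+ m2.
  by rewrite /M card_prod !card_ffun !card_bool !card_ord natrM !natrX.
transitivity (\sum_(xy : cube m1 * cube m2) pm (g xy.1 xy.2) / M *
   (\sum_(S : {set 'I_m1}) chi S xy.1 * chi S a) *
   (\sum_(T : {set 'I_m2}) chi T xy.2 * chi T b)).
  rewrite (bigD1 (a, b)) //= [X in _ + X]big1 ?addr0.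
    rewrite !sum_chi_mul !eqxx M_2pow; field.
    by rewrite !expf_neq0 // pnatr_eq0.
  move=> [x y] /=; rewrite xpair_eqE negb_and !sum_chi_mul.
  by case/orP => /negbTE ->; rewrite ?mulr0 ?mul0r.
rewrite /ghat /Exp -/M.
under [RHS]eq_bigr => S _ do under eq_bigr => T _ do rewrite !mulr_suml.
rewrite exchange_big /=; under [RHS]eq_bigr => T _ do rewrite exchange_big /=.
rewrite exchange_big /=; apply: eq_bigr => xy _.
rewrite mulr_sumr; apply: eq_bigr => T _.
rewrite mulr_sumr mulr_suml; apply: eq_bigr => S _.
ring.
Qed.

Hypothesis ghat_set0 : forall (S : {set 'I_m1}) (T : {set 'I_m2}),
  (S == set0) || (T == set0) -> ghat (R := R) g S T = 0.

Lemma gadget_fourier_nonempty (a : cube m1) (b : cube m2) :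
  pm (g a b) = \sum_(P : {set 'I_m1} * {set 'I_m2} | (P.1 != set0) && (P.2 != set0))
                 ghat (R := R) g P.1 P.2 * chi P.1 a * chi P.2 b.
Proof.
rewrite gadget_fourier pair_bigA /= [RHS]big_mkcond /=.
apply: eq_bigr => -[S T] _ /=; case: ifPn => // /nandP/orP.
by rewrite !negbK => /ghat_set0 ->; rewrite !mul0r.
Qed.

Variable n : nat.

Definition exact_supp (J : {set 'I_n})
    (S : {ffun 'I_n -> {set 'I_m1}}) (T : {ffun 'I_n -> {set 'I_m2}}) : bool :=
  [forall i, if i \in J then (S i != set0) && (T i != set0)
             else (S i == set0) && (T i == set0)].

Lemma prod_pm_gadget_expand (J : {set 'I_n}) (x : blocks n m1) (y : blocks n m2) :
  \prod_(i in J) pm (g (x i) (y i)) =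
  \sum_(S : {ffun 'I_n -> {set 'I_m1}}) \sum_(T : {ffun 'I_n -> {set 'I_m2}} | exact_supp J S T)
    \prod_(i in J) ghat (R := R) g (S i) (T i) * bchi S x * bchi T y.
Proof.
pose Q i (P : {set 'I_m1} * {set 'I_m2}) :=
  if i \in J then (P.1 != set0) && (P.2 != set0) else (P.1 == set0) && (P.2 == set0).
pose F i (P : {set 'I_m1} * {set 'I_m2}) : R :=
  (if i \in J then ghat g P.1 P.2 else 1) * chi P.1 (x i) * chi P.2 (y i).
have -> : \prod_(i in J) pm (g (x i) (y i)) = \prod_i \sum_(P | Q i P) F i P.
  rewrite big_mkcond; apply: eq_bigr => i _; rewrite /Q /F.
  case: (i \in J); first exact: gadget_fourier_nonempty.
  by rewrite (big_pred1 (set0, set0)) ?chi_set0 ?mulr1 // => -[S T].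
pose zip_ST (ST : {ffun 'I_n -> {set 'I_m1}} * {ffun 'I_n -> {set 'I_m2}}) :
  {ffun 'I_n -> {set 'I_m1} * {set 'I_m2}} := [ffun i => (ST.1 i, ST.2 i)].
rewrite bigA_distr_big_dep pair_big_dep (reindex zip_ST) /=.
  apply: eq_big => [[S T]|[S T] _] /=.
    by apply/familyP/forallP => QST i; move: (QST i); rewrite ffunE.
  under eq_bigr => i _ do rewrite ffunE /F /=.
  by rewrite /bchi big_split /= big_split /= -big_mkcond.
exists (fun f => ([ffun i => (f i).1], [ffun i => (f i).2])).
  by move=> [S T] _ /=; congr pair; apply/ffunP => i; rewrite !ffunE.
by move=> f _; apply/ffunP => i; rewrite !ffunE; case: (f i).
Qed.

Lemma sum_prod_pm_gadget (D : blocks n m1 * blocks n m2 -> R) (J : {set 'I_n}) :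
  \sum_(xy : blocks n m1 * blocks n m2) D xy * \prod_(i in J) pm (g (xy.1 i) (xy.2 i)) =
  \sum_(S : {ffun 'I_n -> {set 'I_m1}}) \sum_(T : {ffun 'I_n -> {set 'I_m2}} | exact_supp J S T)
    (\sum_(xy : blocks n m1 * blocks n m2) D xy * bchi S xy.1 * bchi T xy.2)
      * \prod_(i in J) ghat g (S i) (T i).
Proof.
under eq_bigr => xy _ do rewrite prod_pm_gadget_expand mulr_sumr.
rewrite exchange_big; apply: eq_bigr => S _.
under eq_bigr do rewrite mulr_sumr.
rewrite exchange_big; apply: eq_bigr => T _.
by rewrite mulr_suml; apply: eq_bigr => xy _; ring.
Qed.

Lemma sum_prod_pm_gadget_eq0 (J : {set 'I_n}) : J != set0 ->
  \sum_(xy : blocks n m1 * blocks n m2) \prod_(i in J) pm (g (xy.1 i) (xy.2 i)) = 0 :> R.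
Proof.
case/set0Pn => i iJ; have /= := sum_prod_pm_gadget (fun=> 1) J.
under eq_bigr do rewrite mul1r; move=> ->.
apply: big1 => S _; apply: big1 => T /forallP/(_ i); rewrite iJ => /andP [Si_nz _].
under eq_bigr do rewrite mul1r.
by rewrite -(pair_big predT predT (fun x y => bchi S x * bchi T y)) -big_distrlr
  (sum_bchi_eq0 _ Si_nz) /= !mul0r.
Qed.

Definition gvec (x : blocks n m1) (y : blocks n m2) : {ffun 'I_n -> bool} :=
  [ffun i => g (x i) (y i)].

Lemma gvec_eqE x y z : (gvec x y == z) = [forall i, g (x i) (y i) == z i].
Proof.
apply/eqP/forallP => [<- i|gz]; first by rewrite ffunE.
by apply/ffunP => i; rewrite ffunE; apply/eqP.
Qed.

Lemma card_gfiber (z : {ffun 'I_n -> bool}) :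
  #|[pred xy : blocks n m1 * blocks n m2 | [forall i, g (xy.1 i) (xy.2 i) == z i]]|%:R
    * 2%:R ^+ n = #|{: blocks n m1 * blocks n m2}|%:R :> R.
Proof.
(* 2^n [gvec x y = z] = prod_i (1 + pm z_i pm g_i), and after expanding the
   product only the empty character survives the summation. *)
transitivity (\sum_(xy : blocks n m1 * blocks n m2)
                \prod_(i < n) (pm (z i) * pm (gvec xy.1 xy.2 i) + 1) : R).
  under eq_bigr do rewrite prod_pm_add1 eq_sym gvec_eqE.
  by rewrite -big_mkcond sumr_const mulr_natl.
under eq_bigr do rewrite prod_add1_subsets.
rewrite exchange_big (bigD1 set0) //= [X in _ + X]big1 => [|J J_nz].
  by under eq_bigr do rewrite big_set0; rewrite sumr_const addr0.
under eq_bigr do rewrite big_split /=.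
rewrite -mulr_sumr; under [X in _ * X]eq_bigr do under eq_bigr do rewrite ffunE.
by rewrite sum_prod_pm_gadget_eq0 // mulr0.
Qed.

Lemma gfiber_hatE (C : blocks n m1 -> blocks n m2 -> R) (I : {set 'I_n}) :
  gfiber_hat g C I =
  (\sum_(xy : blocks n m1 * blocks n m2) C xy.1 xy.2 * \prod_(i in I) pm (g (xy.1 i) (xy.2 i)))
    / #|{: blocks n m1 * blocks n m2}|%:R.
Proof.
have N_nz : #|{: blocks n m1 * blocks n m2}|%:R != 0 :> R.
  rewrite pnatr_eq0 -lt0n; apply/card_gt0P.
  by exists ([ffun=> [ffun=> false]], [ffun=> [ffun=> false]]).
rewrite (partition_big (fun xy => gvec xy.1 xy.2) predT) //= mulr_suml.
rewrite /gfiber_hat /Exp card_ffun card_bool card_ord natrX mulr_suml.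
apply: eq_bigr => z _; rewrite /gfiber /=.
have := N_nz; rewrite -(card_gfiber z) mulf_eq0 negb_or => /andP [card_nz two_pow_nz].
rewrite (eq_bigl _ _ (fun xy => gvec_eqE xy.1 xy.2 z)) !mulr_suml.
apply: eq_bigr => xy /forallP gz.
have -> : \prod_(i in I) pm (g (xy.1 i) (xy.2 i)) = \prod_(i in I) pm (z i) :> R.
  by apply: eq_bigr => i _; rewrite (eqP (gz i)).
by field; apply/andP.
Qed.

End Gadget.

Unset Implicit Arguments.

Theorem fact7p4 (R : realFieldType) (n m1 m2 : nat)
    (g : cube m1 -> cube m2 -> bool)
    (hg : forall (S : {set 'I_m1}) (T : {set 'I_m2}),
        (S == set0) || (T == set0) -> ghat (R := R) g S T = 0)
    (C : blocks n m1 -> blocks n m2 -> R)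
    (hC : forall x y, -1 <= C x y <= 1)
    (I : {set 'I_n}) :
  gfiber_hat g C I =
  \sum_(S : {ffun 'I_n -> {set 'I_m1}})
   \sum_(T : {ffun 'I_n -> {set 'I_m2}}
         | [forall i, if i \in I then (S i != set0) && (T i != set0)
                      else (S i == set0) && (T i == set0)])
     Chat C S T * \prod_(i in I) ghat g (S i) (T i).
Proof.
rewrite (gfiber_hatE hg) (sum_prod_pm_gadget hg (fun xy => C xy.1 xy.2)) mulr_suml.
apply: eq_bigr => S _; rewrite mulr_suml; apply: eq_bigr => T _.
by rewrite /Chat /Exp mulrAC.
Qed.
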